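(* For every admissible $(\alpha,s)$, the measure $\mu^{\alpha}_{s,2}$ is a free compound Poisson distribution: there exist $\eta,M>0$ such that $R_{\mu^\alpha_{s,2}}(1/z)\cdot$ — equivalently, $\phi_{\mu^{\alpha}_{s,2}}(z)=z^2G_{a^{\alpha}_{s/4}}(z)-z$ for $z\in\Gamma_{\eta,M}$, i.e. $R_{\mu^\alpha_{s,2}}=\psi_{a^\alpha_{s/4}}$ — with rate $\lambda=1$ and jump distribution $a^{\alpha}_{s/4}$. In particular $\mu^{\alpha}_{s,2}$ is $\boxplus$-infinitely divisible and its free Lévy measure is the monotone $\alpha$-stable law $a^{\alpha}_{s/4}$.
   Context: Powers: for $w\in\mathbb{C}\setminus[0,\infty)$ and $p\in\{\alpha,1/\alpha\}$, $w^p:=e^{p\log_{(1)}w}$ with $\operatorname{Im}\log_{(1)}w\in(0,2\pi)$; $w^{1/r}$ is the principal power on $\mathbb{C}\setminus(-\infty,0]$; $(-1)^{\alpha-1}:=e^{i(\alpha-1)\pi}$. A pair $(\alpha,s)$ ($0<\alpha\le2$, $\arg s\in(-\pi,\pi]$) is admissible if either $0<\alpha\le1$ and $(1-\alpha)\pi\le\arg s\le\pi$, or $1<\alpha\le2$ and $0\le\arg s\le(2-\alpha)\pi$. For $r\ge1$ and admissible $(\alpha,s)$, $\mu^\alpha_{s,r}$ is the probability measure with Cauchy transform $G^{\alpha}_{s,r}(z)=-r^{1/\alpha}\big(\frac{1-(1-s(-1/z)^{\alpha})^{1/r}}{s}\big)^{1/\alpha}$ on $\mathbb{C}_+$. The monotone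 $\alpha$-stable law $a^\alpha_s$ is the probability measure with $F_{a^\alpha_s}(z)=(z^\alpha+(-1)^{\alpha-1}s)^{1/\alpha}$. For a probability measure $\mu$: $G_\mu(z)=\int\frac{\mu(dx)}{z-x}$, $F_\mu=1/G_\mu$, Voiculescu transform $\phi_\mu(z)=F_\mu^{-1}(z)-z$ on a truncated cone $\Gamma_{\eta,M}=\{\operatorname{Im}z>M,\operatorname{Im}z>\eta|\operatorname{Re}z|\}$, $R_\mu(z)=z\phi_\mu(1/z)$, $\psi_\mu(z)=\int\frac{zx}{1-zx}\mu(dx)$. $\mu$ is $\boxplus$-infinitely divisible iff $R_\mu(z)=cz+az^2+\int_{\mathbb{R}}\big(\frac{1}{1-xz}-1-xz\mathbf 1_{\{|x|\le1\}}\big)\nu(dx)$ with $c\in\mathbb{R}$, $a\ge0$, $\nu$ a measure with $\nu(\{0\})=0$, $\int\min(1,x^2)\nu(dx)<\infty$; $\nu$ is the (free) Lévy measure. $\mu$ is free compound Poisson if $R_\mu=\lambda\psi_\nu$ for some $\lambda\ge0$ and probability measure $\nu$; then $\lambda\nu$ is its Lévy measure (away from $0$). *)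

From HB Require Import structures.
From mathcomp Require Import all_boot all_order all_algebra.
From mathcomp Require Import all_classical all_reals all_analysis.
From mathcomp Require Import complex.

Set Implicit Arguments.
Unset Strict Implicit.
Unset Printing Implicit Defensive.

Import Order.TTheory GRing.Theory Num.Theory.
Import numFieldNormedType.Exports.

Local Open Scope ring_scope.
Local Open Scope complex_scope.

Section Defs.
Variable R : realType.
Local Notation C := R[i].

Definition cmod (w : C) : R := Num.sqrt (complex.Re w ^+ 2 + complex.Im w ^+ 2).

Definition cexp (w : C) : C :=
  (expR (complex.Re w))%:C * ((cos (complex.Im w)) +i* (sin (complex.Im w))).

(* principal argument, values in (-pi, pi]  (for w <> 0) *)
Definition argP (w : C) : R :=
  if 0 <= complex.Im w then acos (complex.Re w / cmod w) else - acos (complex.Re w / cmod w).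

(* argument with values in (0, 2 pi) on C \ [0, oo) *)
Definition arg1 (w : C) : R :=
  if 0 <= complex.Im w then acos (complex.Re w / cmod w) else 2 * pi - acos (complex.Re w / cmod w).

Definition log1 (w : C) : C := (ln (cmod w)) +i* (arg1 w).
Definition logP (w : C) : C := (ln (cmod w)) +i* (argP w).

Definition pow1 (w : C) (p : R) : C := cexp (p%:C * log1 w).
Definition powP (w : C) (p : R) : C := cexp (p%:C * logP w).

Definition minus1pow (alpha : R) : C := cexp (0 +i* ((alpha - 1) * pi)).

Definition admissible (alpha : R) (s : C) : Prop :=
  s != 0 /\
  ((0 < alpha <= 1 /\ (1 - alpha) * pi <= argP s <= pi) \/
   (1 < alpha <= 2 /\ 0 <= argP s <= (2 - alpha) * pi)).

Definition G_alpha_sr (alpha : R) (s : C) (r : R) (z : C) : C :=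
  - (r `^ alpha^-1)%:C *
    pow1 ((1 - powP (1 - s * pow1 (- z^-1) alpha) r^-1) / s) alpha^-1.

Definition F_monotone_stable (alpha : R) (s : C) (z : C) : C :=
  pow1 (pow1 z alpha + minus1pow alpha * s) alpha^-1.

(* Cauchy transform of a probability measure on R, as real part + i imaginary part:
   1/(z-x) = (complex.Re z - x)/|z-x|^2 - i complex.Im z/|z-x|^2 *)
Definition cauchyT (mu : probability R R) (z : C) : C :=
  (\int[mu]_x ((complex.Re z - x) / ((complex.Re z - x) ^+ 2 + complex.Im z ^+ 2)))
  +i* (\int[mu]_x (- complex.Im z / ((complex.Re z - x) ^+ 2 + complex.Im z ^+ 2))).

Definition Ftrans (mu : probability R R) (z : C) : C := (cauchyT mu z)^-1.

Definition Gamma (eta M : R) (z : C) : Prop :=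
  M < complex.Im z /\ eta * `|complex.Re z| < complex.Im z.

(* phi is the Voiculescu transform of mu on Gamma_{eta,M}:
   F_mu is injective on some truncated cone Gamma_{eta',M'} and for every
   z in Gamma_{eta,M}, phi z = F_mu^{-1}(z) - z, where F_mu^{-1}(z) is the
   (unique) preimage of z in Gamma_{eta',M'}. *)
Definition voiculescu_on (mu : probability R R) (eta M : R) (phi : C -> C) : Prop :=
  exists eta' M' : R, 0 < eta' /\ 0 < M' /\
    (forall w1 w2, Gamma eta' M' w1 -> Gamma eta' M' w2 ->
       Ftrans mu w1 = Ftrans mu w2 -> w1 = w2) /\
    (forall z, Gamma eta M z ->
       exists w, Gamma eta' M' w /\ Ftrans mu w = z /\ phi z = w - z).

End Defs.

From HB Require Import structures.
From mathcomp Require Import all_boot all_order all_algebra.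
From mathcomp Require Import all_classical all_reals all_analysis.
From mathcomp Require Import complex ring lra.

(* Write L = log z and t = (-1/z)^alpha, which is small for z far out in a cone.
   The monotone stable law satisfies F(z) = exp (L + lam / alpha) with
   e^lam = 1 - t s/4, so w := z^2 / F(z) = exp (L - lam / alpha).  Then
   (-1/w)^alpha = t (1 - t s/4), so 1 - s (-1/w)^alpha = (1 - t s/2)^2 is a
   perfect square and G_{s,2}(w) = 1/z, i.e. F_mu(w) = z and phi(z) = w - z;
   as lam is small, w is again far out in a cone.  Injectivity of F_mu on such
   a cone runs the computation backwards: G_{s,2}(w) = -2^{1/alpha} e^A
   determines A, hence s (-1/w)^alpha = 1 - (1 - s e^{alpha A})^2, hence w.
   Every branch of log and of the powers is controlled by keeping arguments in
   sectors away from the cuts. *)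

Set Implicit Arguments.
Unset Strict Implicit.
Unset Printing Implicit Defensive.
Import Order.TTheory GRing.Theory Num.Theory.
Import numFieldNormedType.Exports Normc.
Local Open Scope ring_scope.
Local Open Scope complex_scope.

Section ComplexFunctions.
Variable R : realType.
Local Notation C := R[i].
Local Notation Re := (@complex.Re R).
Local Notation Im := (@complex.Im R).

Lemma complex_ext (x y : C) : Re x = Re y -> Im x = Im y -> x = y.
Proof. by case: x; case: y => /= a b c d -> ->. Qed.

Lemma ReD (x y : C) : Re (x + y) = Re x + Re y. Proof. by case: x; case: y. Qed.
Lemma ImD (x y : C) : Im (x + y) = Im x + Im y. Proof. by case: x; case: y. Qed.
Lemma ReN (x : C) : Re (- x) = - Re x. Proof. by case: x. Qed.
Lemma ImN (x : C) : Im (- x) = - Im x. Proof. by case: x. Qed.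
Lemma ReM (x y : C) : Re (x * y) = Re x * Re y - Im x * Im y.
Proof. by case: x; case: y. Qed.
Lemma ImM (x y : C) : Im (x * y) = Re x * Im y + Im x * Re y.
Proof. by case: x; case: y. Qed.
Lemma ReZ (a : R) (x : C) : Re (a%:C * x) = a * Re x.
Proof. by rewrite ReM /= mul0r subr0. Qed.
Lemma ImZ (a : R) (x : C) : Im (a%:C * x) = a * Im x.
Proof. by rewrite ImM /= mul0r addr0. Qed.
Lemma ReV (x : C) : Re x^-1 = Re x / (Re x ^+ 2 + Im x ^+ 2). Proof. by case: x. Qed.
Lemma ImV (x : C) : Im x^-1 = - (Im x / (Re x ^+ 2 + Im x ^+ 2)). Proof. by case: x. Qed.

Lemma mulCVK (a : R) (x : C) : a != 0 -> a%:C * (a^-1%:C * x) = x.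
Proof. by move=> a0; rewrite mulrA -rmorphM /= mulfV // rmorph1 mul1r. Qed.

Lemma mulVCK (a : R) (x : C) : a != 0 -> a^-1%:C * (a%:C * x) = x.
Proof. by move=> a0; rewrite mulrA -rmorphM /= mulVf // rmorph1 mul1r. Qed.

Lemma Im_gt0_neq0 (x : C) : 0 < Im x -> x != 0.
Proof. by move=> h; apply: contraTneq h => ->; rewrite ltxx. Qed.

Lemma cmodE (x : C) : cmod x = normc x. Proof. by case: x. Qed.
Lemma cmod_ge0 (x : C) : 0 <= cmod x. Proof. exact: sqrtr_ge0. Qed.

Lemma cmod_sqr (x : C) : cmod x ^+ 2 = Re x ^+ 2 + Im x ^+ 2.
Proof. by rewrite /cmod sqr_sqrtr // addr_ge0 // sqr_ge0. Qed.

Lemma cmod_gt0 (x : C) : x != 0 -> 0 < cmod x.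
Proof.
move=> x0; rewrite lt_neqAle cmod_ge0 andbT eq_sym; apply/eqP => h.
by move/eqP: x0; apply; rewrite cmodE in h; apply: eq0_normc.
Qed.

Lemma cmodM (x y : C) : cmod (x * y) = cmod x * cmod y.
Proof. by rewrite !cmodE normcM. Qed.
Lemma cmodV (x : C) : cmod x^-1 = (cmod x)^-1.
Proof. by rewrite !cmodE normcV. Qed.
Lemma cmodN (x : C) : cmod (- x) = cmod x.
Proof. by rewrite !cmodE normcN. Qed.
Lemma cmodD (x y : C) : cmod (x + y) <= cmod x + cmod y.
Proof. by rewrite !cmodE le_normcD. Qed.
Lemma cmodR (a : R) : cmod a%:C = `|a|.
Proof. by rewrite /cmod /= expr0n /= addr0 sqrtr_sqr. Qed.
Lemma cmod1 : cmod (1 : C) = 1.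
Proof. by rewrite -[1 : C]/(1%:C) cmodR normr1. Qed.

Lemma normRe_le (x : C) : `|Re x| <= cmod x.
Proof.
rewrite -(ger0_norm (cmod_ge0 x)) -ler_sqr ?nnegrE ?normr_ge0 //.
by rewrite !real_normK ?num_real // cmod_sqr lerDl sqr_ge0.
Qed.

Lemma normRe_lt (x : C) : Im x != 0 -> `|Re x| < cmod x.
Proof.
move=> h; rewrite -(ger0_norm (cmod_ge0 x)) -ltr_sqr ?nnegrE ?normr_ge0 //.
rewrite !real_normK ?num_real // cmod_sqr ltrDl lt_neqAle sqr_ge0 andbT.
by rewrite eq_sym sqrf_eq0.
Qed.

Lemma Im_le_cmod (x : C) : Im x <= cmod x.
Proof.
apply: le_trans (ler_norm _) _.
rewrite -(ger0_norm (cmod_ge0 x)) -ler_sqr ?nnegrE ?normr_ge0 //.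
by rewrite !real_normK ?num_real // cmod_sqr lerDr sqr_ge0.
Qed.

Lemma cos_arg_bound (x : C) : x != 0 -> -1 <= Re x / cmod x <= 1.
Proof.
move=> x0; have m0 := cmod_gt0 x0.
rewrite -ler_norml normrM normfV (gtr0_norm m0) ler_pdivrMr // mul1r.
exact: normRe_le.
Qed.

Lemma sin_arg_sqr (x : C) : x != 0 ->
  1 - (Re x / cmod x) ^+ 2 = (Im x / cmod x) ^+ 2.
Proof.
move=> x0; have m0 := cmod_gt0 x0.
have e : Im x ^+ 2 = cmod x ^+ 2 - Re x ^+ 2 by rewrite cmod_sqr; ring.
by rewrite !expr_div_n e; field; exact: lt0r_neq0.
Qed.

Lemma cmod_divn_le (x : C) (n : nat) : (0 < n)%N -> cmod (x / n%:R) <= cmod x.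
Proof.
move=> n0; have -> : x / n%:R = (n%:R^-1)%:C * x by rewrite fmorphV rmorph_nat mulrC.
rewrite cmodM cmodR ger0_norm ?invr_ge0 ?ler0n //.
by apply: ler_piMl (cmod_ge0 _) _; rewrite invf_le1 ?ler1n ?ltr0n.
Qed.

Lemma Re_1D_gt0 (x : C) : cmod x < 1 -> 0 < Re (1 + x).
Proof.
move=> hx; rewrite ReD /=.
by have := le_lt_trans (normRe_le x) hx; rewrite ltr_norml; lra.
Qed.

Lemma onerB_neq0 (x : C) : cmod x < 1 -> 1 - x != 0.
Proof.
move=> hx; have := @Re_1D_gt0 (- x); rewrite cmodN => /(_ hx).
by apply: contraTneq => ->; rewrite ltxx.
Qed.

Lemma Re_cexp (x : C) : Re (cexp x) = expR (Re x) * cos (Im x).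
Proof. by rewrite /cexp ReM /= mul0r subr0. Qed.
Lemma Im_cexp (x : C) : Im (cexp x) = expR (Re x) * sin (Im x).
Proof. by rewrite /cexp ImM /= mul0r addr0. Qed.

Lemma cexpD (x y : C) : cexp (x + y) = cexp x * cexp y.
Proof.
apply: complex_ext.
  by rewrite Re_cexp ReM !Re_cexp !Im_cexp ReD ImD expRD cosD; ring.
by rewrite Im_cexp ImM !Re_cexp !Im_cexp ReD ImD expRD sinD; ring.
Qed.

Lemma cexp0 : cexp (0 : C) = 1.
Proof. by apply: complex_ext; rewrite ?Re_cexp ?Im_cexp /= expR0 ?cos0 ?sin0 mul1r. Qed.

Lemma cexp_neq0 (x : C) : cexp x != 0.
Proof.
apply/eqP => h; have := cexpD x (- x); rewrite subrr cexp0 h mul0r.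
by move/eqP; rewrite oner_eq0.
Qed.

Lemma cexpN (x : C) : cexp (- x) = (cexp x)^-1.
Proof. by apply: (mulfI (cexp_neq0 x)); rewrite -cexpD subrr cexp0 mulfV // cexp_neq0. Qed.

Lemma cexpR (a : R) : cexp a%:C = (expR a)%:C.
Proof. by apply: complex_ext; rewrite ?Re_cexp ?Im_cexp /= ?cos0 ?sin0 ?mulr1 ?mulr0. Qed.

Lemma cexp_ipi : cexp (0 +i* pi) = -1 :> C.
Proof. by apply: complex_ext; rewrite ?Re_cexp ?Im_cexp /= expR0 ?cospi ?sinpi mul1r ?oppr0. Qed.

Lemma cmod_cexp (x : C) : cmod (cexp x) = expR (Re x).
Proof.
rewrite /cmod Re_cexp Im_cexp !exprMn -mulrDr cos2Dsin2 mulr1.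
by rewrite sqrtr_sqr ger0_norm // expR_ge0.
Qed.

Lemma cos_arg_cexp (x : C) : Re (cexp x) / cmod (cexp x) = cos (Im x).
Proof. by rewrite Re_cexp cmod_cexp [expR _ * _]mulrC mulfK // gt_eqF ?expR_gt0. Qed.

Lemma opp_inv_cexp (x : C) : - (cexp x)^-1 = cexp (- x + (0 +i* pi)).
Proof. by rewrite cexpD cexpN cexp_ipi mulrN1. Qed.

Lemma cos_2piB (x : R) : cos (2 * pi - x) = cos x.
Proof. by rewrite mulr_natl cosB cos2pi sin2pi mul1r mul0r addr0. Qed.

Lemma sin_2piB (x : R) : sin (2 * pi - x) = - sin x.
Proof. by rewrite mulr_natl sinB cos2pi sin2pi mul1r mul0r sub0r. Qed.

Lemma sin_piB (x : R) : sin (pi - x) = sin x.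
Proof. by rewrite sinB sinpi cospi mul0r sub0r mulNr mul1r opprK. Qed.

Lemma sin_lt0_2pi (x : R) : pi < x < 2 * pi -> sin x < 0.
Proof.
move=> /andP[h1 h2]; rewrite -(subrK pi x) sinDpi oppr_lt0 sin_gt0_pi //.
by rewrite subr_gt0 h1 ltrBlDr -mulr2n -mulr_natl.
Qed.

Lemma lt_acos (x y : R) : -1 <= x -> x < y -> y <= 1 -> acos y < acos x.
Proof.
move=> h1 h2 h3.
have hx : x \in `[-1, 1] by rewrite in_itv /= h1 (le_trans (ltW h2) h3).
have hy : y \in `[-1, 1] by rewrite in_itv /= h3 andbT (le_trans h1 (ltW h2)).
have ax : acos x \in `[0, pi] by rewrite in_itv /= acos_ge0 ?acos_lepi.
have ay : acos y \in `[0, pi] by rewrite in_itv /= acos_ge0 ?acos_lepi.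
by rewrite -(ltr_cos ay ax) !acosK.
Qed.

Lemma cos_lt1 (x : R) : 0 < x <= pi -> cos x < 1.
Proof.
move=> /andP[h1 h2]; rewrite -cos0 ltr_cos // in_itv /= ?lexx ?pi_ge0 //.
by rewrite ltW.
Qed.

Lemma sin_lt_sector (t x : R) : 0 < t <= pi / 2 -> t < x < pi - t -> sin t < sin x.
Proof.
move=> /andP[t0 t1] /andP[x1 x2]; have hp := pi_gt0 R.
have mem (y : R) : - (pi / 2) <= y <= pi / 2 -> y \in `[- (pi / 2), pi / 2] by rewrite in_itv.
have [xle|xgt] := lerP x (pi / 2).
  by rewrite (ltr_sin (mem _ _) (mem _ _)) //; apply/andP; split; lra.
rewrite -[sin x]sin_piB (ltr_sin (mem _ _) (mem _ _)); first lra.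
  by apply/andP; split; lra.
by apply/andP; split; lra.
Qed.

Lemma atan_sector (eta : R) : 0 < eta -> 0 < atan eta < pi / 2.
Proof. by move=> h; rewrite -{1}(atan0 R) lt_atan // atan_ltpi2. Qed.

(** * Branches of the logarithm and of the powers *)

Lemma log1K (w : C) : w != 0 -> cexp (log1 w) = w.
Proof.
move=> w0; have m0 := cmod_gt0 w0; have hc := cos_arg_bound w0.
have hc' : Re w / cmod w \in `[-1, 1] by rewrite in_itv.
have em : expR (ln (cmod w)) = cmod w by apply: lnK; rewrite posrE.
apply: complex_ext; rewrite ?Re_cexp ?Im_cexp /log1 /= em /arg1.
  by case: ifP => _; rewrite ?cos_2piB acosK // mulrC divfK // lt0r_neq0.
case: ifP => hI; rewrite ?sin_2piB (sin_acos hc) sin_arg_sqr // sqrtr_sqr.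
  rewrite ger0_norm; first by rewrite mulrC divfK // lt0r_neq0.
  by rewrite divr_ge0 // ltW.
rewrite ltr0_norm; first by rewrite opprK mulrC divfK // lt0r_neq0.
by rewrite pmulr_llt0 ?invr_gt0 // ltNge hI.
Qed.

Lemma logPK (w : C) : w != 0 -> cexp (logP w) = w.
Proof.
move=> w0; have m0 := cmod_gt0 w0; have hc := cos_arg_bound w0.
have hc' : Re w / cmod w \in `[-1, 1] by rewrite in_itv.
have em : expR (ln (cmod w)) = cmod w by apply: lnK; rewrite posrE.
apply: complex_ext; rewrite ?Re_cexp ?Im_cexp /logP /= em /argP.
  by case: ifP => _; rewrite ?cosN acosK // mulrC divfK // lt0r_neq0.
case: ifP => hI; rewrite ?sinN (sin_acos hc) sin_arg_sqr // sqrtr_sqr.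
  rewrite ger0_norm; first by rewrite mulrC divfK // lt0r_neq0.
  by rewrite divr_ge0 // ltW.
rewrite ltr0_norm; first by field; exact: lt0r_neq0.
by rewrite pmulr_llt0 ?invr_gt0 // ltNge hI.
Qed.

Lemma log1_cexp (x : C) : 0 < Im x < 2 * pi -> log1 (cexp x) = x.
Proof.
move=> /andP[h1 h2].
apply: complex_ext; rewrite /log1 /=; first by rewrite cmod_cexp expRK.
rewrite /arg1 Im_cexp cos_arg_cexp.
have [xle|xgt] := lerP (Im x) pi.
  rewrite ifT; first by rewrite cosK // in_itv /= ltW.
  by rewrite mulr_ge0 ?expR_ge0 // sin_ge0_pi // ltW.
rewrite ifF; last by apply/negbTE; rewrite -ltNge pmulr_rlt0 ?expR_gt0 ?sin_lt0_2pi ?xgt.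
rewrite -cos_2piB cosK; first by rewrite opprB addrC subrK.
rewrite in_itv /= subr_ge0 ltW //= lerBlDr -lerBlDl.
by rewrite mulr_natl mulr2n addrK ltW.
Qed.

Lemma logP_cexp (x : C) : - pi < Im x < pi -> logP (cexp x) = x.
Proof.
move=> /andP[h1 h2].
apply: complex_ext; rewrite /logP /=; first by rewrite cmod_cexp expRK.
rewrite /argP Im_cexp cos_arg_cexp.
have [xge|xlt] := lerP 0 (Im x).
  rewrite ifT; first by rewrite cosK // in_itv /= xge ltW.
  by rewrite mulr_ge0 ?expR_ge0 // sin_ge0_pi // xge ltW.
rewrite ifF; last first.
  apply/negbTE; rewrite -ltNge pmulr_rlt0 ?expR_gt0 //.
  by rewrite -[Im x]opprK sinN oppr_lt0 sin_gt0_pi // oppr_gt0 xlt ltrNl.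
by rewrite cosKN ?opprK // ltW //= ltW.
Qed.

Lemma Im_log1 (w : C) : 0 <= Im w -> Im (log1 w) = acos (Re w / cmod w).
Proof. by move=> h; rewrite /log1 /= /arg1 h. Qed.

Lemma normIm_logP (w : C) : w != 0 -> `|Im (logP w)| = acos (Re w / cmod w).
Proof.
move=> w0; have hc := cos_arg_bound w0.
by rewrite /logP /= /argP; case: ifP => _; rewrite ?normrN ger0_norm // acos_ge0.
Qed.

Lemma normIm_logP_lt (w : C) (g : R) : w != 0 -> 0 < g <= pi ->
  cos g < Re w / cmod w -> `|Im (logP w)| < g.
Proof.
move=> w0 /andP[g0 gpi] hc; rewrite normIm_logP //.
have /andP[_ h1] := cos_arg_bound w0.
rewrite -[X in _ < X](@cosK _ g) ?in_itv /= ?gpi ?ltW //.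
exact: lt_acos (cos_geN1 _) hc h1.
Qed.

Lemma pow1_cexp (x : C) (p : R) : 0 < Im x < 2 * pi -> pow1 (cexp x) p = cexp (p%:C * x).
Proof. by move=> h; rewrite /pow1 log1_cexp. Qed.

Lemma powP_cexp (x : C) (p : R) : - pi < Im x < pi -> powP (cexp x) p = cexp (p%:C * x).
Proof. by move=> h; rewrite /powP logP_cexp. Qed.

Lemma cmod_pow1 (w : C) (p : R) : cmod (pow1 w p) = expR (p * ln (cmod w)).
Proof. by rewrite /pow1 cmod_cexp ReZ. Qed.

Lemma powP_half_sqr (w : C) : w != 0 -> powP w 2^-1 ^+ 2 = w.
Proof.
move=> w0; rewrite /powP expr2 -cexpD -mulrDl -rmorphD /=.
have -> : (2^-1 + 2^-1 : R) = 1 by field.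
by rewrite -[X in X * _]/(1%:C) mul1r logPK.
Qed.

Lemma Re_powP_half_ge0 (w : C) : w != 0 -> 0 <= Re (powP w 2^-1).
Proof.
move=> w0; rewrite /powP Re_cexp ImZ mulr_ge0 ?expR_ge0 // cos_ge0_pihalf //.
have := acos_lepi (cos_arg_bound w0); rewrite -normIm_logP // ler_norml.
move=> /andP[h1 h2]; apply/andP; split; lra.
Qed.

Lemma powP_half_sqrK (w : C) : 0 < Re w -> powP (w ^+ 2) 2^-1 = w.
Proof.
move=> hw; have w0 : w != 0 by apply: contraTneq hw => ->; rewrite ltxx.
have hpi := pi_gt0 R.
have : `|Im (logP w)| < pi / 2.
  apply: normIm_logP_lt => //; first by apply/andP; split; lra.
  by rewrite cos_pihalf divr_gt0 // cmod_gt0.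
rewrite ltr_norml => /andP[h1 h2].
rewrite -{1}(logPK w0) expr2 -cexpD powP_cexp ?ImD; last by apply/andP; split; lra.
rewrite mulrDr -mulrDl -rmorphD /=.
have -> : (2^-1 + 2^-1 : R) = 1 by field.
by rewrite -[X in X * _]/(1%:C) mul1r logPK.
Qed.

Lemma sqrt_subr1_le (q v : C) : q ^+ 2 = 1 - v -> 0 <= Re q -> cmod (q - 1) <= cmod v.
Proof.
move=> hq Rq.
have e : (q - 1) * (q + 1) = - v by rewrite -subr_sqr hq; ring.
have h1 : 1 <= cmod (q + 1).
  apply: le_trans (normRe_le _); rewrite ReD /=; apply: le_trans (ler_norm _).
  by rewrite lerDr.
by rewrite -(cmodN v) -e cmodM ler_peMr ?cmod_ge0.
Qed.

Lemma cexp_inj_strip (x y : C) : 0 < Im x < 2 * pi -> 0 < Im y < 2 * pi ->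
  cexp x = cexp y -> x = y.
Proof. by move=> hx hy e; rewrite -(log1_cexp hx) e log1_cexp. Qed.

Lemma Im_log1_upper (z : C) : 0 < Im z -> 0 < Im (log1 z) < pi.
Proof.
move=> hz; have z0 := Im_gt0_neq0 hz; have m0 := cmod_gt0 z0.
have : `|Re z / cmod z| < 1.
  by rewrite normf_div (gtr0_norm m0) ltr_pdivrMr // mul1r normRe_lt // lt0r_neq0.
rewrite ltr_norml => /andP[h1 h2].
by rewrite Im_log1 ?ltW // acos_gt0 ?acos_ltpi // ?h1 ?h2 ?ltW.
Qed.

Lemma pow1_oppV (z : C) (p : R) : 0 < Im z ->
  pow1 (- z^-1) p = cexp (p%:C * (- log1 z + (0 +i* pi))).
Proof.
move=> hz; have /andP[h1 h2] := Im_log1_upper hz.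
rewrite -{1}(log1K (Im_gt0_neq0 hz)) opp_inv_cexp pow1_cexp //.
by move: h1 h2; rewrite ImD ImN /= => h1 h2; apply/andP; split; lra.
Qed.

Lemma minus1powE (alpha : R) : minus1pow alpha = - cexp (alpha%:C * (0 +i* pi)).
Proof.
rewrite /minus1pow.
have -> : alpha%:C * (0 +i* pi) = 0 +i* (alpha * pi) :> C.
  by apply: complex_ext; rewrite ?ReZ ?ImZ /= ?mulr0.
have -> : 0 +i* ((alpha - 1) * pi) = (0 +i* (alpha * pi)) + - (0 +i* pi) :> C.
  by apply: complex_ext; rewrite ?ReD ?ImD ?ReN ?ImN /= ?subr0; ring.
by rewrite cexpD cexpN cexp_ipi invrN invr1 mulrN1.
Qed.

(** * Arguments near 1 and truncated cones *)

(* A radius r with cos g < (1 - r) / (1 + r), so that |arg (1 + u)| < g for |u| <= r. *)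
Definition arg_radius (g : R) : R := (1 - cos g) / 4.

Lemma arg_radius_bounds (g : R) : 0 < g <= pi -> 0 < arg_radius g < 1.
Proof.
move=> hg; have := cos_geN1 g; have := cos_lt1 hg.
by rewrite /arg_radius => *; apply/andP; split; lra.
Qed.

Lemma logP_near1 (g : R) (u : C) : 0 < g <= pi -> cmod u <= arg_radius g ->
  [/\ 1 + u != 0, `|Im (logP (1 + u))| < g & Re (logP (1 + u)) <= ln (1 + arg_radius g)].
Proof.
move=> hg hu; have /andP[e0 e1] := arg_radius_bounds hg.
have hcos : cos g < (1 - arg_radius g) / (1 + arg_radius g).
  have := cos_geN1 g; have := cos_lt1 hg.
  rewrite /arg_radius => h1 h2; rewrite ltr_pdivlMr; [nra | lra].
set e := arg_radius g in hu e0 e1 hcos *.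
have hre : 1 - e <= Re (1 + u).
  by have := le_trans (normRe_le u) hu; rewrite ReD /= ler_norml; lra.
have u0 : 1 + u != 0 by apply/eqP => h; move: hre; rewrite h /=; lra.
have m0 := cmod_gt0 u0.
have hm : cmod (1 + u) <= 1 + e by apply: le_trans (cmodD _ _) _; rewrite cmod1 lerD2l.
split => //.
  apply: normIm_logP_lt => //; apply: lt_le_trans hcos _.
  apply: (@le_trans _ _ ((1 - e) / cmod (1 + u))); last by rewrite ler_pM2r ?invr_gt0.
  by rewrite ler_wpM2l ?lef_pV2 ?posrE //; lra.
by rewrite /logP /= ler_ln ?posrE //; lra.
Qed.

Lemma cone_arg (eta : R) (w : C) : 0 < eta -> 0 < Im w -> eta * `|Re w| < Im w ->
  atan eta < Im (log1 w) < pi - atan eta.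
Proof.
move=> he hI hc; have w0 := Im_gt0_neq0 hI; have m0 := cmod_gt0 w0.
have sq0 : 0 < Num.sqrt (1 + eta ^+ 2) by rewrite sqrtr_gt0 ltr_wpDr ?sqr_ge0.
have : `|Re w / cmod w| < cos (atan eta).
  rewrite cos_atan normf_div (gtr0_norm m0) ltr_pdivrMr // mulrC ltr_pdivlMr //.
  rewrite -ltr_sqr ?nnegrE ?mulr_ge0 ?normr_ge0 ?cmod_ge0 ?ltW //.
  rewrite exprMn sqr_sqrtr ?addr_ge0 ?ler01 ?sqr_ge0 // real_normK ?num_real // cmod_sqr.
  have : (eta * `|Re w|) ^+ 2 < Im w ^+ 2 by rewrite ltr_sqr ?nnegrE ?mulr_ge0 ?normr_ge0 ?ltW.
  by rewrite exprMn real_normK ?num_real //; nra.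
rewrite ltr_norml => /andP[k1 k2].
have /andP[a0 a1] := atan_sector he; have hpi := pi_gt0 R.
have ha : atan eta \in `[0, pi] by rewrite in_itv /=; apply/andP; split; lra.
have /andP[c1 c2] := cos_arg_bound w0.
rewrite Im_log1 ?ltW //; apply/andP; split.
  by rewrite -{1}(cosK ha); apply: lt_acos => //; exact: cos_le1.
rewrite -{1}(cosK ha) -acosN ?cos_geN1 ?cos_le1 //.
by apply: lt_acos => //; rewrite lerNl opprK cos_le1.
Qed.

Lemma sector_cone (t : R) (x : C) : 0 < t <= pi / 2 -> t < Im x < pi - t ->
  sin t * `|Re (cexp x)| < Im (cexp x) /\ expR (Re x) * sin t < Im (cexp x).
Proof.
move=> ht hx; have hs := sin_lt_sector ht hx.
have /andP[t0 t1] := ht; have hpi := pi_gt0 R.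
have st0 : 0 < sin t by apply: sin_gt0_pi; apply/andP; split; lra.
have e0 := expR_gt0 (Re x).
rewrite Re_cexp Im_cexp; split; last by rewrite ltr_pM2l.
rewrite normrM (gtr0_norm e0) mulrCA ltr_pM2l //.
apply: le_lt_trans hs; rewrite -[X in _ <= X]mulr1.
by apply: ler_wpM2l; [exact: ltW | exact: cos_max].
Qed.

Lemma cone_oppV (eta : R) (w : C) : 0 < Im w -> eta * `|Re w| < Im w ->
  0 < Im (- w^-1) /\ eta * `|Re (- w^-1)| < Im (- w^-1).
Proof.
move=> hI hc.
have n0 : 0 < Re w ^+ 2 + Im w ^+ 2 by rewrite ltr_wpDl ?sqr_ge0 ?exprn_gt0.
have i0 : 0 < (Re w ^+ 2 + Im w ^+ 2)^-1 by rewrite invr_gt0.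
rewrite ReN ImN ReV ImV opprK normrN normrM (gtr0_norm i0).
by rewrite divr_gt0 // mulrA ltr_pM2r.
Qed.

Lemma cmod_pow1_oppV_lt (alpha e : R) (s w : C) : 0 < alpha -> 0 < e -> s != 0 ->
  expR ((ln (cmod s) - ln e) / alpha) < cmod w -> cmod (s * pow1 (- w^-1) alpha) < e.
Proof.
move=> ha he s0 hw; have s0' := cmod_gt0 s0.
have w0 : 0 < cmod w := lt_trans (expR_gt0 _) hw.
have : (ln (cmod s) - ln e) / alpha < ln (cmod w).
  by rewrite -[X in X < _]expRK ltr_ln ?posrE ?expR_gt0.
rewrite ltr_pdivrMr // => h.
rewrite cmodM cmod_pow1 cmodN cmodV lnV ?posrE // -[cmod s]lnK ?posrE //.
by rewrite -expRD -[e]lnK ?posrE // ltr_expR; lra.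
Qed.

Lemma one_add_sqrt_arg (g : R) (v : C) : 0 < g <= pi -> cmod v <= arg_radius g ->
  exists2 k : C, cexp k = 1 + powP (1 - v) 2^-1 & `|Im k| < g.
Proof.
move=> hg hv; have /andP[_ e1] := arg_radius_bounds hg.
have v0 := onerB_neq0 (le_lt_trans hv e1).
set q := powP (1 - v) 2^-1.
have hq : cmod (q - 1) <= cmod v.
  exact: sqrt_subr1_le (powP_half_sqr v0) (Re_powP_half_ge0 v0).
have hd : cmod ((q - 1) / 2) <= arg_radius g.
  exact: le_trans (cmod_divn_le _ _) (le_trans hq hv).
have [d0 hk _] := logP_near1 hg hd.
exists ((ln 2)%:C + logP (1 + (q - 1) / 2)); last by rewrite ImD /= add0r.
by rewrite cexpD cexpR logPK // lnK ?posrE // rmorph_nat; field.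
Qed.

End ComplexFunctions.

Section StableLaws.
Variable R : realType.
Local Notation C := R[i].
Local Notation Re := (@complex.Re R).
Local Notation Im := (@complex.Im R).
Variables (alpha : R) (s : C).
Hypotheses (alpha_gt0 : 0 < alpha) (alpha_le2 : alpha <= 2) (s_neq0 : s != 0).

Let alpha_neq0 : alpha != 0 := lt0r_neq0 alpha_gt0.

Lemma alpha_angle (t : R) : 0 < t < pi / 2 -> 0 < alpha * t <= pi.
Proof.
move=> /andP[t0 t1]; have := ler_wpM2r (ltW t0) alpha_le2.
by rewrite mulr_gt0 //= => h; lra.
Qed.

Lemma alpha_pi_le : alpha * pi <= 2 * pi.
Proof. by rewrite ler_wpM2r // pi_ge0. Qed.

Lemma alphaV_Im_bound (th : R) (lam : C) : `|Im lam| < alpha * th / 2 ->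
  - (th / 2) < alpha^-1 * Im lam < th / 2.
Proof. by move=> h; rewrite -ltr_norml normrM ger0_norm ?invr_ge0 ?ltW // ltr_pdivrMl // mulrA. Qed.

Lemma G2E (w : C) : G_alpha_sr alpha s 2 w =
  - (2 `^ alpha^-1)%:C * pow1 ((1 - powP (1 - s * pow1 (- w^-1) alpha) 2^-1) / s) alpha^-1.
Proof. by []. Qed.

Definition G_domain (th : R) (w : C) : Prop :=
  [/\ 0 < Im w, th < Im (log1 (- w^-1)) < pi - th &
      cmod (s * pow1 (- w^-1) alpha) <= arg_radius (alpha * th)].

Lemma G_cexp_form (th : R) (w : C) : 0 < th < pi / 2 -> G_domain th w ->
  exists A : C, [/\ G_alpha_sr alpha s 2 w = - (2 `^ alpha^-1)%:C * cexp A,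
    0 < Im A < pi & s * pow1 (- w^-1) alpha = 1 - (1 - s * cexp (alpha%:C * A)) ^+ 2].
Proof.
move=> hth [_ /andP[N1 N2] hst]; have /andP[th0 _] := hth.
set N := log1 (- w^-1); set t := pow1 (- w^-1) alpha.
have tE : t = cexp (alpha%:C * N) by [].
have [k kE hk] := one_add_sqrt_arg (alpha_angle hth) hst.
have /andP[_ e1] := arg_radius_bounds (alpha_angle hth).
have st0 := onerB_neq0 (le_lt_trans hst e1).
set q := powP (1 - s * t) 2^-1 in kE *.
have hq2 : q ^+ 2 = 1 - s * t := powP_half_sqr st0.
have q1 : 1 + q != 0 by rewrite -kE cexp_neq0.
have hh : (1 - q) * (1 + q) = s * t by rewrite -subr_sqr expr1n hq2; ring.
have uE : (1 - q) / s = cexp (alpha%:C * N - k).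
  rewrite cexpD cexpN kE -tE; apply: (mulIf q1); rewrite mulfVK //.
  by rewrite mulrAC hh mulrC mulKf.
move: hk; rewrite ltr_norml => /andP[k1 k2].
have aN1 : alpha * th < alpha * Im N by rewrite ltr_pM2l.
have aN2 : alpha * Im N < alpha * (pi - th) by rewrite ltr_pM2l.
have api := alpha_pi_le.
set A := N - alpha^-1%:C * k.
have aA : alpha%:C * A = alpha%:C * N - k by rewrite mulrBr mulCVK.
exists A; split.
- rewrite G2E -/t -/q uE pow1_cexp; last by rewrite ImD ImN ImZ; apply/andP; split; lra.
  by rewrite -aA mulVCK.
- have : `|alpha^-1 * Im k| < th.
    rewrite normrM ger0_norm ?invr_ge0 ?ltW // mulrC ltr_pdivrMr // mulrC ltr_norml.
    by apply/andP; split; lra.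
  rewrite ltr_norml => /andP[j1 j2].
  by rewrite /A ImD ImN ImZ; apply/andP; split; lra.
- rewrite aA -uE [s * (_ / _)]mulrC mulfVK // (_ : 1 - (1 - q) = q) ?hq2; ring.
Qed.

Lemma G_inj (th : R) (w1 w2 : C) : 0 < th < pi / 2 ->
  G_domain th w1 -> G_domain th w2 ->
  G_alpha_sr alpha s 2 w1 = G_alpha_sr alpha s 2 w2 -> w1 = w2.
Proof.
move=> hth dom1 dom2.
have [A1 [-> IA1 S1]] := G_cexp_form hth dom1.
have [A2 [-> IA2 S2]] := G_cexp_form hth dom2.
have [hI1 hN1 _] := dom1; have [hI2 hN2 _] := dom2.
have hpi := pi_gt0 R; have /andP[th0 _] := hth.
have c0 : - (2 `^ alpha^-1)%:C != 0 :> C.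
  by rewrite oppr_eq0 (inj_eq (@complexI R)) gt_eqF // powR_gt0.
move=> /(mulfI c0) eA.
have {}eA : A1 = A2.
  by apply: cexp_inj_strip eA; [move: IA1 | move: IA2] => /andP[a b]; apply/andP; split; lra.
have in_strip (w : C) : th < Im (log1 (- w^-1)) < pi - th ->
    0 < Im (alpha%:C * log1 (- w^-1)) < 2 * pi.
  move=> /andP[b1 b2]; rewrite ImZ; apply/andP; split.
    exact: mulr_gt0 alpha_gt0 (lt_trans th0 b1).
  apply: lt_le_trans alpha_pi_le; rewrite ltr_pM2l //.
  by apply: lt_trans b2 _; rewrite ltrBlDr ltrDl.
have eN : alpha%:C * log1 (- w1^-1) = alpha%:C * log1 (- w2^-1).
  apply: cexp_inj_strip (in_strip _ hN1) (in_strip _ hN2) _.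
  by apply: (mulfI s_neq0); rewrite -[cexp _]/(pow1 _ _) S1 S2 eA.
have := congr1 (@cexp R) (congr1 (fun x => alpha^-1%:C * x) eN).
rewrite !mulVCK // !log1K ?oppr_eq0 ?invr_eq0 ?Im_gt0_neq0 //.
by move/oppr_inj/invr_inj.
Qed.

Lemma F_stable_cexp (th : R) (z lam : C) : 0 < th < pi / 2 -> 0 < Im z ->
  th < Im (log1 z) < pi - th ->
  cexp lam = 1 - pow1 (- z^-1) alpha * (s / 4) -> `|Im lam| < alpha * th / 2 ->
  F_monotone_stable alpha (s / 4) z = cexp (log1 z + alpha^-1%:C * lam).
Proof.
move=> /andP[th0 _] hz /andP[L1 L2] lamE.
rewrite ltr_norml => /andP[l1 l2].
set L := log1 z in L1 L2 *.
have sumE : pow1 z alpha + minus1pow alpha * (s / 4) = cexp (alpha%:C * L + lam).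
  rewrite cexpD lamE mulrDr mulr1 minus1powE pow1_oppV //; congr (_ + _).
  rewrite mulrN mulNr (mulrA (cexp (alpha%:C * L))) -cexpD.
  by congr (- (cexp _ * _)); rewrite /L; ring.
have aL1 : alpha * th < alpha * Im L by rewrite ltr_pM2l.
have aL2 : alpha * Im L < alpha * (pi - th) by rewrite ltr_pM2l.
have api := alpha_pi_le.
rewrite /F_monotone_stable sumE pow1_cexp; first by rewrite mulrDr mulVCK.
by rewrite ImD ImZ; apply/andP; split; lra.
Qed.

Lemma G_cexp_inverse (th : R) (z lam : C) : 0 < th < pi / 2 -> 0 < Im z ->
  th < Im (log1 z) < pi - th -> cmod (s * pow1 (- z^-1) alpha) < 1 ->
  cexp lam = 1 - pow1 (- z^-1) alpha * (s / 4) -> `|Im lam| < alpha * th / 2 ->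
  G_alpha_sr alpha s 2 (cexp (log1 z - alpha^-1%:C * lam)) = z^-1.
Proof.
move=> /andP[th0 _] hz /andP[L1 L2] hst lamE hlam; have hpi := pi_gt0 R.
set L := log1 z in L1 L2 *; set t := pow1 (- z^-1) alpha in hst lamE *.
have tE : t = cexp (alpha%:C * (- L + (0 +i* pi))) := pow1_oppV _ hz.
have /andP[la1 la2] := alphaV_Im_bound hlam.
have twE : pow1 (- (cexp (L - alpha^-1%:C * lam))^-1) alpha = t * (1 - t * (s / 4)).
  rewrite opp_inv_cexp pow1_cexp; last first.
    by move: L1 L2; rewrite !(ImD, ImN, ImZ) /= => L1 L2; apply/andP; split; lra.
  rewrite (_ : _ + _ = (- L + (0 +i* pi)) + alpha^-1%:C * lam); last by ring.
  by rewrite mulrDr mulCVK // cexpD lamE -tE.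
have Rp : 0 < Re (1 - t * (s / 2)).
  apply: Re_1D_gt0; rewrite cmodN mulrA [t * s]mulrC.
  exact: le_lt_trans (cmod_divn_le _ _) hst.
set p := 1 - t * (s / 2) in Rp *.
rewrite G2E twE (_ : 1 - s * _ = p ^+ 2); last by rewrite /p; field.
rewrite powP_half_sqrK //.
set Y := alpha%:C * (- L + (0 +i* pi)) + (- ln 2)%:C.
have YE : (1 - p) / s = cexp Y.
  rewrite /Y cexpD cexpR expRN lnK ?posrE ?ltr0n // -tE /p.
  by rewrite fmorphV rmorph_nat; field.
have hY : 0 < Im Y < 2 * pi.
  move: L1 L2; rewrite /Y !(ImD, ImN, ImZ) /= addr0 => L1 L2.
  apply/andP; split; first by rewrite mulr_gt0 //; lra.
  by apply: lt_le_trans alpha_pi_le; rewrite ltr_pM2l //; lra.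
rewrite YE pow1_cexp // /Y mulrDr mulVCK // -rmorphM cexpD cexpR.
rewrite -(log1K (Im_gt0_neq0 hz)) -/L -opp_inv_cexp /powR pnatr_eq0 /=.
rewrite !mulNr mulrN opprK mulrCA -rmorphM /= -expRD mulrN subrr expR0.
by rewrite rmorph1 mulr1.
Qed.

Lemma G_inj_cone (eta : R) : 0 < eta ->
  exists2 M : R, 0 < M & forall w1 w2 : C, Gamma eta M w1 -> Gamma eta M w2 ->
    G_alpha_sr alpha s 2 w1 = G_alpha_sr alpha s 2 w2 -> w1 = w2.
Proof.
move=> he; have hth := atan_sector he; set th := atan eta in hth *.
have /andP[e0 _] := arg_radius_bounds (alpha_angle hth).
set M := expR ((ln (cmod s) - ln (arg_radius (alpha * th))) / alpha).
have far w : Gamma eta M w -> G_domain th w.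
  move=> [h1 h2]; have hw := lt_trans (expR_gt0 _) h1.
  have [hw' hc'] := cone_oppV hw h2.
  split => //; first exact: cone_arg.
  by apply/ltW/cmod_pow1_oppV_lt => //; exact: lt_le_trans h1 (Im_le_cmod w).
exists M; first exact: expR_gt0.
by move=> w1 w2 /far dom1 /far dom2; exact: G_inj hth dom1 dom2.
Qed.

Lemma inverse_on_cone (eta : R) : 0 < eta ->
  exists eta' M K : R, [/\ 0 < eta', 0 < M, 0 < K & forall z : C, Gamma eta M z ->
    exists w : C, [/\ eta' * `|Re w| < Im w, K * cmod z < Im w,
      G_alpha_sr alpha s 2 w = z^-1 & z ^+ 2 / F_monotone_stable alpha (s / 4) z = w]].
Proof.
move=> he; have hth := atan_sector he; set th := atan eta in hth *.
have /andP[th0 th1] := hth; have hpi := pi_gt0 R.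
have hg : 0 < alpha * th / 2 <= pi.
  by have /andP[g0 g1] := alpha_angle hth; apply/andP; split; lra.
have /andP[e0 e1] := arg_radius_bounds hg; set e := arg_radius _ in e0 e1 *.
have hth2 : 0 < th / 2 <= pi / 2 by apply/andP; split; lra.
exists (sin (th / 2)), (expR ((ln (cmod s) - ln e) / alpha)),
  (expR (- (ln (1 + e) / alpha)) * sin (th / 2)).
have st0 : 0 < sin (th / 2) by apply: sin_gt0_pi; apply/andP; split; lra.
split; rewrite ?mulr_gt0 ?expR_gt0 // => z [hz1 hz2].
have hz := lt_trans (expR_gt0 _) hz1; have z0 := cmod_gt0 (Im_gt0_neq0 hz).
have harg : th < Im (log1 z) < pi - th := cone_arg he hz hz2.
have hs := cmod_pow1_oppV_lt alpha_gt0 e0 s_neq0 (lt_le_trans hz1 (Im_le_cmod z)).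
set t := pow1 (- z^-1) alpha in hs *.
have hu : cmod (- (t * (s / 4))) <= e.
  by rewrite cmodN mulrA [t * s]mulrC (le_trans (cmod_divn_le _ _) (ltW hs)).
have [u0 hlam hRe] := logP_near1 hg hu; set lam := logP _ in hlam hRe.
have lamE : cexp lam = 1 - t * (s / 4) := logPK u0.
have /andP[la1 la2] := alphaV_Im_bound hlam.
set X := log1 z - alpha^-1%:C * lam.
have hX : th / 2 < Im X < pi - th / 2.
  by move: harg; rewrite /X ImD ImN ImZ => /andP[L1 L2]; apply/andP; split; lra.
have [c1 c2] := sector_cone hth2 hX.
exists (cexp X); split => //.
- apply: le_lt_trans c2; rewrite mulrAC ler_pM2r // /X ReD ReN ReZ expRD /=.
  rewrite lnK ?posrE // mulrC ler_pM2l //.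
  by rewrite ler_expR lerN2 mulrC ler_pM2r ?invr_gt0.
- exact: G_cexp_inverse hth hz harg (lt_trans hs e1) lamE hlam.
- rewrite (F_stable_cexp hth hz harg lamE hlam) -{1}(log1K (Im_gt0_neq0 hz)).
  by rewrite -cexpN expr2 -!cexpD /X; congr cexp; ring.
Qed.

End StableLaws.

Lemma admissible_range (R : realType) (alpha : R) (s : R[i]) :
  admissible alpha s -> [/\ 0 < alpha, alpha <= 2 & s != 0].
Proof.
move=> [s0 [[/andP[a0 a1] _] | [/andP[a0 a1] _]]]; split => //.
- by apply: le_trans a1 _; rewrite ler1n.
- exact: lt_trans ltr01 a0.
Qed.

Theorem theorem4p1 (R : realType) (alpha : R) (s : R[i])
  (mu a : probability R R) :
  admissible alpha s ->
  (forall z : R[i], 0 < complex.Im z -> cauchyT mu z = G_alpha_sr alpha s 2 z) ->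
  (forall z : R[i], 0 < complex.Im z -> Ftrans a z = F_monotone_stable alpha (s / 4) z) ->
  exists eta M : R, 0 < eta /\ 0 < M /\
    voiculescu_on mu eta M (fun z => z ^+ 2 * cauchyT a z - z).
Proof.
move=> /admissible_range[a0 a2 s0] Gmu Fa.
have [eta' [Mz [K [eta'0 Mz0 K0 inv]]]] := inverse_on_cone a0 a2 s0 ltr01.
have [Mw Mw0 Ginj] := G_inj_cone a0 a2 s0 eta'0.
have upper eta (w : R[i]) : Gamma eta Mw w -> 0 < complex.Im w.
  by move=> [hw _]; exact: lt_trans Mw0 hw.
exists 1, (Num.max Mz (Mw / K)); split => //; split; first by rewrite lt_max Mz0.
exists eta', Mw; split => //; split => //; split.
  move=> w1 w2 h1 h2 hF; apply: (Ginj _ _ h1 h2).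
  by rewrite -(Gmu _ (upper _ _ h1)) -(Gmu _ (upper _ _ h2)); exact: invr_inj.
move=> z [hz1 hz2]; rewrite gt_max in hz1; have /andP[hzMz hzMw] := hz1.
have [w [c1 c2 Gw Fw]] := inv z (conj hzMz hz2).
have hw : Mw < complex.Im w.
  apply: lt_trans c2; rewrite -ltr_pdivrMl // mulrC.
  exact: lt_le_trans hzMw (Im_le_cmod z).
exists w; split; first by split.
split; first by rewrite /Ftrans (Gmu _ (lt_trans Mw0 hw)) Gw invrK.
by rewrite -Fw -[cauchyT a z]invrK -/(Ftrans a z) (Fa _ (lt_trans Mz0 hzMz)).
Qed.
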